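(* Let $d\ge2$ and let $\{\tau_e\}$ be i.i.d. non-negative edge weights on $\mathbb Z^d$. Fix $M>0$ and $k\in\mathbb N$. There exist constants $C>0$ and $C'\ge1$, depending only on $k$ and $d$, such that for every $e\in\mathcal E^d$, $$\mathbb P(e\text{ is }(k,M)\text{-large})\ \le\ C\,\big(\mathbb P(\tau_e\ge M/C')^{k}\big)^{d-1}.$$
   Context: $\mathcal E^d$ is the set of nearest-neighbor edges of $\mathbb Z^d$. For $e=\{a,b\}$ let $v_e$ be the endpoint of smaller $\ell^1$ norm. For $k\ge1$: ${S^e_k}'=\{z\in\mathbb Z^d:|v_e-z|_\infty=k\}$ and $S^e_k=\{\{u,w\}\in\mathcal E^d:u,w\in{S^e_k}'\}$; ${S^e_0}'$ is the set of endpoints of $e$ and $S^e_0=\{e\}$. For $u,w\in{S^e_h}'$, $T_{S^e_h}(u,w)$ is the minimum of $\sum_{e'\in\gamma}\tau_{e'}$ over self-avoiding paths $\gamma$ from $u$ to $w$ using only edges of $S^e_h$. The edge $e$ is $(k,M)$-large if for each $h=0,1,\dots,k$ there exist $u,w\in{S^e_h}'$ with $T_{S^e_h}(u,w)\ge M$. *)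

From HB Require Import structures.
From mathcomp Require Import all_boot all_order all_algebra.
From mathcomp Require Import all_classical all_reals all_analysis.
Set Implicit Arguments. Unset Strict Implicit. Unset Printing Implicit Defensive.
Import Order.TTheory GRing.Theory Num.Theory.
Local Open Scope classical_set_scope.
Local Open Scope ring_scope.

Definition vtx (d : nat) := {ffun 'I_d -> int}.

Definition l1norm d (x : vtx d) : nat := (\sum_(i < d) absz (x i))%N.
Definition l1dist d (x y : vtx d) : nat := (\sum_(i < d) absz (x i - y i))%N.
Definition linfdist d (x y : vtx d) : nat := (\max_(i < d) absz (x i - y i))%N.

(* An edge is stored as the ordered pair (v_e, other endpoint), where v_e is the
   endpoint of smaller l^1 norm (the two norms always differ by exactly 1). *)
Definition is_edge d (p : vtx d * vtx d) : bool :=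
  (l1dist p.1 p.2 == 1%N) && (l1norm p.1 < l1norm p.2)%N.
Definition Edge d := {p : vtx d * vtx d | is_edge p}.

Definition ve d (e : Edge d) : vtx d := (val e).1.
Definition endpoints d (e : Edge d) : seq (vtx d) := [:: (val e).1; (val e).2].

Definition edge_of d (x y : vtx d) : option (Edge d) :=
  if insub (x, y) is Some e then Some e else insub (y, x).

Definition Sv d (e : Edge d) (h : nat) : set (vtx d) :=
  if h == 0%N then [set z | z \in endpoints e]
  else [set z | linfdist (ve e) z = h].
Definition Se d (e : Edge d) (h : nat) : set (Edge d) :=
  if h == 0%N then [set e]
  else [set f | Sv e h (val f).1 /\ Sv e h (val f).2].

Definition sa_path d (A : set (Edge d)) (u w : vtx d) (gam : seq (vtx d)) : Prop :=
  [/\ head u gam = u, last u gam = w, gam != [::], uniq gam &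
      forall p, p \in zip gam (behead gam) ->
        exists2 f, edge_of p.1 p.2 = Some f & A f].

Definition path_weight d (R : realType) (tau : Edge d -> R) (gam : seq (vtx d)) : R :=
  \sum_(p <- zip gam (behead gam))
     (if edge_of p.1 p.2 is Some f then tau f else 0).

(* T_A(u, w): infimum of passage times over self-avoiding paths in A
   (+oo if there is none). *)
Definition passT d (R : realType) (A : set (Edge d)) (tau : Edge d -> R)
  (u w : vtx d) : \bar R :=
  ereal_inf [set (path_weight tau gam)%:E | gam in [set g | sa_path A u w g]].

Definition kM_large d (R : realType) (k : nat) (M : R) (tau : Edge d -> R)
  (e : Edge d) : Prop :=
  forall h : nat, (h <= k)%N ->
    exists u w, [/\ Sv e h u, Sv e h w & (M%:E <= passT (Se e h) tau u w)%E].

Definition mutually_independent {I : eqType} (dT : measure_display)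
  (T : measurableType dT) (R : realType) (P : probability T R)
  (X : I -> T -> R) : Prop :=
  forall (s : seq I) (B : I -> set R), uniq s ->
    (forall i, i \in s -> measurable (B i)) ->
    P (\bigcap_(i in [set i | i \in s]) (X i @^-1` B i)) =
    (\prod_(i <- s) P (X i @^-1` B i))%E.

Definition identically_distributed {I : Type} (dT : measure_display)
  (T : measurableType dT) (R : realType) (P : probability T R)
  (X : I -> T -> R) : Prop :=
  forall (i j : I) (B : set R), measurable B ->
    P (X i @^-1` B) = P (X j @^-1` B).

(* If e is (k, M)-large then each sphere S_h, 1 <= h <= k, contains u and w with
   T_{S_h}(u, w) >= M.  Put N = (2k+1)^d, the number of vertices of the box of
   radius k, and t = M / N.  A self-avoiding path has fewer than N edges, so w is
   not in the cluster of u formed by edges of weight < t; as S_h is connected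
   (d >= 2), some edge {a, b} of S_h, b = a + s e_j, leaves that cluster and has
   weight >= t.  Let i != j be a coordinate in which a is extremal.  For each
   l different from i and j the detour a, a + e_l, b + e_l, b (with the sign of
   e_l chosen to stay in S_h) also leaves the cluster, which yields a heavy edge
   of S_h in the (l, j)-plane through a, off the line through a in direction j.
   So every S_h carries d - 1 distinct edges of weight >= t, and the whole box
   carries k (d - 1) of them.  A union bound over the finitely many ways of
   choosing k (d - 1) edges of the box, each choice having probability
   P(tau_e >= t)^(k (d - 1)) by independence, gives the bound. *)

From HB Require Import structures.
From mathcomp Require Import all_boot all_order all_algebra.
From mathcomp Require Import all_classical all_reals all_analysis.
From mathcomp Require Import zify.
Set Implicit Arguments. Unset Strict Implicit. Unset Printing Implicit Defensive.
Import Order.TTheory GRing.Theory Num.Theory.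
Local Open Scope classical_set_scope.
Local Open Scope ring_scope.

Section Lattice.
Variable d : nat.
Implicit Types (a b v z : vtx d) (c l : 'I_d) (s : int).

(* Unlike [ffunP], this exposes [c : 'I_d] itself, on which [lia] works. *)
Lemma vtxP a b : (forall c, a c = b c) -> a = b.
Proof. by move=> ab; apply/ffunP. Qed.

Definition shift a l s : vtx d := [ffun c => if c == l then a c + s else a c].

Lemma shiftE a l s c : shift a l s c = if c == l then a c + s else a c.
Proof. by rewrite ffunE. Qed.

Lemma shift_id a l s c : c != l -> shift a l s c = a c.
Proof. by rewrite shiftE => /negbTE ->. Qed.

Lemma shift_neq a l s : s != 0 -> shift a l s l != a l.
Proof. by move=> s_neq0; rewrite shiftE eqxx -subr_eq0 addrAC subrr add0r. Qed.

Lemma shiftK a l s : shift (shift a l s) l (- s) = a.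
Proof. by apply/vtxP => c; rewrite !shiftE; case: eqP => // _; rewrite addrK. Qed.

Lemma shiftC a l j s s' : shift (shift a l s) j s' = shift (shift a j s') l s.
Proof. by apply/vtxP => c; rewrite !shiftE; case: (c == l); case: (c == j); rewrite // addrAC. Qed.

Definition adjacent : rel (vtx d) := fun a b =>
  [exists l, (b == shift a l 1) || (b == shift a l (-1))].

Lemma adjacentP a b :
  reflect (exists l s, absz s = 1%N /\ b = shift a l s) (adjacent a b).
Proof.
apply: (iffP existsP) => [[l /orP [] /eqP ->]|[l [s [s1 ->]]]].
- by exists l, 1.
- by exists l, (-1).
- have [->|->] : s = 1 \/ s = -1 by lia.
    by exists l; rewrite eqxx.
  by exists l; rewrite eqxx orbT.
Qed.

Lemma adjacent_shift a l s : absz s = 1%N -> adjacent a (shift a l s).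
Proof. by move=> s_unit; apply/adjacentP; exists l, s. Qed.

Lemma adjacent_sym a b : adjacent a b -> adjacent b a.
Proof.
move=> /adjacentP [l [s [s1 ->]]]; apply/adjacentP.
by exists l, (- s); rewrite shiftK; split => //; lia.
Qed.

Lemma l1dist_sym a b : l1dist a b = l1dist b a.
Proof. by apply: eq_bigr => i _; lia. Qed.

Lemma l1dist_shift a l s : l1dist a (shift a l s) = absz s.
Proof.
rewrite /l1dist (bigD1 l) //= big1 ?addn0 => [|i /negbTE il].
  by rewrite shiftE eqxx; lia.
by rewrite shiftE il; lia.
Qed.

Lemma l1norm_shift a l s :
  (l1norm (shift a l s) + absz (a l))%N = (l1norm a + absz (a l + s)%R)%N.
Proof.
rewrite /l1norm (bigD1 l) //= [in RHS](bigD1 l) //= shiftE eqxx.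
rewrite (eq_bigr (fun i => absz (a i))); last by move=> i /negbTE il; rewrite shiftE il.
by rewrite [RHS]addnC [RHS]addnCA [LHS]addnC.
Qed.

Lemma edge_ofP a b f : edge_of a b = Some f -> val f = (a, b) \/ val f = (b, a).
Proof.
rewrite /edge_of; case: insubP => [g _ vg [<-]|_]; first by left.
by case: insubP => // g _ vg [<-]; right.
Qed.

Lemma edge_of_val (f : Edge d) : edge_of (val f).1 (val f).2 = Some f.
Proof. by rewrite /edge_of -surjective_pairing valK. Qed.

Lemma adjacent_edge a b : adjacent a b -> exists f, edge_of a b = Some f.
Proof.
move=> /adjacentP [l [s [s1 ->]]].
have norm_neq : l1norm a != l1norm (shift a l s).
  by apply/eqP => E; move: (l1norm_shift a l s); rewrite -E; lia.
have : is_edge (a, shift a l s) || is_edge (shift a l s, a).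
  rewrite /is_edge /= l1dist_shift l1dist_sym l1dist_shift s1 eqxx /=.
  by move: norm_neq; case: ltngtP.
rewrite /edge_of => /orP [E|E]; first by exists (Sub _ E); rewrite insubT.
by case: insubP => [f _ _|_]; [exists f | exists (Sub _ E); rewrite insubT].
Qed.

Lemma mem_endpoints a b f z :
  edge_of a b = Some f -> (z \in endpoints f) = (z == a) || (z == b).
Proof.
by rewrite /endpoints !inE => /edge_ofP [] ->; rewrite // orbC.
Qed.

Lemma linfdist_leP v z h :
  reflect (forall c, absz (v c - z c)%R <= h)%N (linfdist v z <= h)%N.
Proof.
rewrite /linfdist; apply: (iffP idP) => [/bigmax_leqP H c | H]; first exact: H.
by apply/bigmax_leqP => c _; apply: H.
Qed.

Lemma leq_linfdist v z c : (absz (v c - z c)%R <= linfdist v z)%N.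
Proof. exact: (leq_bigmax c). Qed.

Lemma linfdist_eqP v z h : (0 < h)%N ->
  linfdist v z = h <->
  (forall c, absz (v c - z c)%R <= h)%N /\ exists c, absz (v c - z c)%R = h.
Proof.
move=> h_gt0; split => [E|[le_h [c Ec]]]; last first.
  by apply/eqP; rewrite eqn_leq -{2}Ec leq_linfdist andbT; apply/linfdist_leP.
split; first by apply/linfdist_leP; rewrite E.
apply: contrapT => no_c.
suff : (linfdist v z <= h.-1)%N by rewrite E; lia.
apply/linfdist_leP => c; have := leq_linfdist v z c; rewrite E => le_h.
have /eqP : absz (v c - z c)%R != h by apply/eqP => Ec; apply: no_c; exists c.
lia.
Qed.

End Lattice.

Section Reachable.
Variables (T : eqType) (r : rel T).

Definition reachable a b := exists2 p, path r a p & last a p = b.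

Lemma reachable_refl a : reachable a a.
Proof. by exists [::]. Qed.

Lemma reachable_trans a b c : reachable a b -> reachable b c -> reachable a c.
Proof.
move=> [p rp <-] [q rq <-]; exists (p ++ q); last by rewrite last_cat.
by rewrite cat_path rp.
Qed.

Lemma reachable_step a b : r a b -> reachable a b.
Proof. by exists [:: b]; rewrite /= ?andbT. Qed.

Lemma reachable_sym a b : symmetric r -> reachable a b -> reachable b a.
Proof.
move=> r_sym [p]; elim: p a => [|x p IH] a /=; first by move=> _ ->; exact: reachable_refl.
move=> /andP [rax rp] lp; apply: reachable_trans (IH x rp lp) _.
by apply: reachable_step; rewrite r_sym.
Qed.

Lemma path_zip a p : path r a p = all (fun xy => r xy.1 xy.2) (zip (a :: p) p).
Proof. by elim: p a => //= b p IH a; rewrite IH. Qed.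

Lemma path_all_targets (P : pred T) a p :
  (forall x y, r x y -> P y) -> path r a p -> all P p.
Proof. by move=> rP; elim: p a => //= b p IH a /andP [/rP -> /IH]. Qed.

End Reachable.

Lemma path_exit (T : eqType) (P : T -> Prop) a p : P a -> ~ P (last a p) ->
  exists2 xy, xy \in zip (a :: p) p & P xy.1 /\ ~ P xy.2.
Proof.
elim: p a => [|b p IH] a /=; first by move=> Pa /(_ Pa).
move=> Pa; have [Pb nPl|nPb _] := pselect (P b).
  by have [xy xy_in] := IH b Pb nPl; exists xy; rewrite // inE xy_in orbT.
by exists (a, b); rewrite ?mem_head.
Qed.

Section SphereConnected.
Variables (d : nat) (v : vtx d) (h : nat).
Hypothesis h_gt0 : (0 < h)%N.
Implicit Types (a b z : vtx d).

Definition sphere z := linfdist v z == h.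

Definition sphere_step : rel (vtx d) := fun a b => [&& adjacent a b, sphere a & sphere b].

Lemma sphere_step_sym : symmetric sphere_step.
Proof.
by move=> a b; apply/and3P/and3P => -[/adjacent_sym ? ? ?].
Qed.

Lemma sphereP z : reflect
  ((forall c, absz (v c - z c)%R <= h)%N /\ exists c, absz (v c - z c)%R = h) (sphere z).
Proof. by apply: (iffP eqP) => /(linfdist_eqP v z h_gt0). Qed.

Lemma sphere_shift z l (s : int) c : sphere z -> (absz (v l - (z l + s))%R <= h)%N ->
  c != l -> absz (v c - z c)%R = h -> sphere (shift z l s).
Proof.
move=> /sphereP [z_le _] zl cl zc; apply/sphereP; split; last by exists c; rewrite shift_id.
by move=> c'; rewrite shiftE; case: eqP => [->|_]; [exact: zl | exact: z_le].
Qed.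

Lemma sphere_detour a j (s : int) i l : absz s = 1%N ->
  sphere a -> sphere (shift a j s) -> i != j -> absz (v i - a i)%R = h ->
  l != i -> l != j ->
  exists y y', [/\ path sphere_step a [:: y; y'; shift a j s], y l != a l, y' l != a l &
    forall z, z \in [:: a; y; y'; shift a j s] -> forall c, c != l -> c != j -> z c = a c].
Proof.
set b := shift a j s => s_unit sa sb ij ai li lj.
have [a_le _] := sphereP a sa.
pose sg : int := if a l - v l < h%:Z then 1 else -1.
have sg_unit : absz sg = 1%N by rewrite /sg; case: ifP.
have sg_neq0 : sg != 0 by rewrite /sg; case: ifP.
have a_sg : (absz (v l - (a l + sg))%R <= h)%N by have := a_le l; rewrite /sg; case: ifP; lia.
have bl : b l = a l by rewrite shift_id.
have bi : b i = a i by rewrite shift_id // eq_sym.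
have il : i != l by rewrite eq_sym.
exists (shift a l sg), (shift b l sg); split.
- have sy := sphere_shift sa a_sg il ai.
  have sy' : sphere (shift b l sg) by apply: sphere_shift sb _ il _; rewrite ?bl ?bi.
  rewrite /= /sphere_step sa sb sy sy' adjacent_shift //= !andbT.
  apply/andP; split; first by rewrite /b shiftC adjacent_shift.
  by rewrite -[b in adjacent _ b](shiftK b l sg) adjacent_shift // abszN.
- exact: shift_neq.
- by rewrite -bl shift_neq.
- by move=> z; rewrite !inE => /or4P [] /eqP -> c cl cj //; rewrite /b !shift_id.
Qed.

(* S_h is connected because every point reaches this corner by steps that decrease
   the l^1 distance to it. *)
Definition corner : vtx d := [ffun c => v c + h%:Z].

Lemma l1dist_corner_shift z l : z l < v l + h%:Z ->
  (l1dist corner (shift z l 1)).+1 = l1dist corner z.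
Proof.
move=> zl; rewrite /l1dist (bigD1 l) //= [in RHS](bigD1 l) //= shiftE eqxx !ffunE.
rewrite (eq_bigr (fun i => absz (corner i - z i)%R)); last first.
  by move=> i /negbTE il; rewrite shiftE il.
by rewrite -addSn; congr (_ + _)%N; lia.
Qed.

Hypothesis d_ge2 : (1 < d)%N.

Lemma exists_other_coord (i : 'I_d) : exists c : 'I_d, c != i.
Proof.
have : (0 < #|predC1 i|)%N by rewrite cardC1 card_ord; lia.
by case/card_gt0P => c; exists c.
Qed.

Lemma sphere_step_toward_corner z : sphere z -> z != corner ->
  exists l, sphere_step z (shift z l 1) /\
            (l1dist corner (shift z l 1) < l1dist corner z)%N.
Proof.
move=> sz z_ncorner; have [z_le [i zi]] := sphereP z sz.
have step l c : z l < v l + h%:Z -> c != l -> absz (v c - z c)%R = h ->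
    exists l, sphere_step z (shift z l 1) /\
              (l1dist corner (shift z l 1) < l1dist corner z)%N.
  move=> zl cl zc; exists l; split; last by rewrite -(l1dist_corner_shift zl).
  have s_next : sphere (shift z l 1).
    by apply: sphere_shift sz _ cl zc; move: (z_le l); lia.
  rewrite /sphere_step sz s_next !andbT.
  by apply/adjacentP; exists l, 1.
have [[l li zl]|at_corner] := pselect (exists2 l, l != i & z l < v l + h%:Z).
  by apply: (step l i); rewrite // eq_sym.
have {}at_corner l : l != i -> z l = v l + h%:Z.
  move=> li; have : ~ z l < v l + h%:Z by move=> zl; apply: at_corner; exists l.
  by move: (z_le l); lia.
have zi_lt : z i < v i + h%:Z.
  have : z i != v i + h%:Z.
    apply: contraNneq z_ncorner => zi_eq; apply/eqP/vtxP => c; rewrite ffunE.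
    by have [->|/at_corner] := eqVneq c i.
  by move: (z_le i); lia.
have [c ci] := exists_other_coord i.
by apply: (step i c zi_lt ci); rewrite at_corner //; lia.
Qed.

Lemma reachable_corner z : sphere z -> reachable sphere_step z corner.
Proof.
move=> sz; have [n] := ubnP (l1dist corner z).
elim: n z sz => // n IH z sz /ltnSE z_le.
have [->|z_ncorner] := eqVneq z corner; first exact: reachable_refl.
have [l [st lt_dist]] := sphere_step_toward_corner sz z_ncorner.
have /and3P [_ _ s_next] := st.
exact: reachable_trans (reachable_step st) (IH _ s_next (leq_trans lt_dist z_le)).
Qed.

Lemma sphere_connected u w : sphere u -> sphere w -> reachable sphere_step u w.
Proof.
move=> su sw; apply: reachable_trans (reachable_corner su) _.
exact: reachable_sym sphere_step_sym (reachable_corner sw).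
Qed.

End SphereConnected.

Lemma uniq_flatten_choice (A B : eqType) (P : A -> B -> Prop) (n : nat) (s : seq A) :
  uniq s ->
  (forall a, a \in s -> exists2 bs : seq B, size bs = n & uniq bs /\ forall b, b \in bs -> P a b) ->
  (forall a a' b, P a b -> P a' b -> a = a') ->
  exists L : seq B,
    [/\ size L = (size s * n)%N, uniq L & forall b, b \in L -> exists2 a, a \in s & P a b].
Proof.
elim: s => [|a s IH] /=; first by exists [::].
move=> /andP [a_notin s_uniq] choice P_inj.
have [|L [sizeL uniqL PL]] := IH s_uniq _ P_inj.
  by move=> a' a's; apply: choice; rewrite inE a's orbT.
have [bs size_bs [uniq_bs Pbs]] := choice a (mem_head a s).
exists (bs ++ L); split.
- by rewrite size_cat size_bs sizeL mulSn.
- rewrite cat_uniq uniq_bs uniqL andbT /=; apply/hasPn => b /PL [a' a's Pa'b].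
  apply/negP => /Pbs Pab; move: a_notin.
  by rewrite (P_inj _ _ _ Pab Pa'b) a's.
- move=> b; rewrite mem_cat => /orP [/Pbs Pab|/PL [a' a's Pa'b]].
    by exists a; rewrite ?mem_head.
  by exists a'; rewrite // inE a's orbT.
Qed.

Section SphereHeavyEdges.
Variables (R : realDomainType) (d : nat) (v : vtx d) (h : nat).
Hypothesis h_gt0 : (0 < h)%N.
Variables (wt : Edge d -> R) (t : R) (u : vtx d).
Implicit Types (a b z : vtx d) (f : Edge d).

Definition sphere_edge f := sphere v h (val f).1 && sphere v h (val f).2.

Definition light_step : rel (vtx d) := fun a b =>
  sphere_step v h a b && if edge_of a b is Some f then wt f < t else false.

Definition light_cluster := reachable light_step u.

Lemma sphere_step_edge a b : sphere_step v h a b ->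
  exists f, edge_of a b = Some f /\ sphere_edge f.
Proof.
move=> /and3P [/adjacent_edge [f ab_f] sa sb]; exists f; split => //.
by rewrite /sphere_edge; case: (edge_ofP ab_f) => ->; apply/andP.
Qed.

Lemma light_cluster_exit a b : light_cluster a -> sphere_step v h a b ->
  ~ light_cluster b -> exists f, [/\ edge_of a b = Some f, sphere_edge f & t <= wt f].
Proof.
move=> Ka ab Kb; have [f [ab_f f_sph]] := sphere_step_edge ab.
exists f; split => //; rewrite leNgt; apply: contra_notN Kb => f_light.
by apply: reachable_trans Ka (reachable_step _); rewrite /light_step ab ab_f.
Qed.

Section Crossing.
Variables (a : vtx d) (j : 'I_d) (s : int).
Let b := shift a j s.
Hypotheses (s_unit : absz s = 1%N) (sa : sphere v h a) (sb : sphere v h b).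
Hypotheses (Ka : light_cluster a) (Kb : ~ light_cluster b).

(* For l != j: f lies in the (l, j)-plane through a, off the line through a in
   direction j. *)
Definition heavy_towards l f := [/\ sphere_edge f, t <= wt f,
  (forall z, z \in endpoints f -> forall c, c != l -> c != j -> z c = a c) &
  exists2 z, z \in endpoints f & z l != a l].

Lemma heavy_towards_inj l l' f : heavy_towards l f -> heavy_towards l' f -> l = l'.
Proof.
have key m m' : m != j -> heavy_towards m f -> heavy_towards m' f -> m = m'.
  move=> mj [_ _ _ [z zf zm]] [_ _ agree _]; apply: contraNeq zm => mm'.
  by rewrite agree.
have [->|lj] := eqVneq l j; last exact: key.
have [->|l'j] := eqVneq l' j; first by [].
by move=> Hj Hl'; rewrite (key _ _ l'j Hl' Hj).
Qed.

Lemma exists_coord_at_radius : exists2 i, i != j & absz (v i - a i)%R = h.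
Proof.
have [_ [i bi]] := sphereP v h_gt0 b sb.
have [ij|nij] := eqVneq i j; last by exists i; rewrite // -(shift_id a s nij).
have [_ [i' ai']] := sphereP v h_gt0 a sa.
have [i'j|] := eqVneq i' j; last by exists i'.
by move: bi ai'; rewrite ij i'j /b shiftE eqxx; lia.
Qed.

Variable i : 'I_d.
Hypotheses (ij : i != j) (ai : absz (v i - a i)%R = h).

Lemma heavy_square l : l != i -> l != j -> exists f, heavy_towards l f.
Proof.
move=> li lj; have [y [y' [walk yl y'l agree]]] := sphere_detour h_gt0 s_unit sa sb ij ai li lj.
have [xy xy_walk [Kx Ky]] := path_exit (p := [:: y; y'; b]) Ka Kb.
have xy_step : sphere_step v h xy.1 xy.2.
  by move: walk; rewrite path_zip => /allP /(_ _ xy_walk).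
have [f [xy_f f_sph f_heavy]] := light_cluster_exit Kx xy_step Ky.
exists f; split => //.
  move=> z; rewrite (mem_endpoints _ xy_f) => z_end; apply: agree.
  by move: xy_walk z_end; rewrite !inE => /or3P [] /eqP -> /orP [] /eqP ->;
     rewrite eqxx ?orbT.
move: xy_walk; rewrite !inE => /or3P [] /eqP xyE;
  [exists y | exists y | exists y'] => //; by rewrite (mem_endpoints _ xy_f) xyE eqxx ?orbT.
Qed.

Lemma heavy_towards_each l : l != i -> exists f, heavy_towards l f.
Proof.
move=> li; have [->|lj] := eqVneq l j; last exact: heavy_square li lj.
have ab : sphere_step v h a b by rewrite /sphere_step sa sb adjacent_shift.
have [f [ab_f f_sph f_heavy]] := light_cluster_exit Ka ab Kb.
have s_neq0 : s != 0 by apply: contra_eq_neq s_unit => ->.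
exists f; split => //; last by exists b; rewrite ?(mem_endpoints _ ab_f) ?eqxx ?orbT ?shift_neq.
move=> z; rewrite (mem_endpoints _ ab_f) => /orP [] /eqP -> c _ cj //.
exact: shift_id.
Qed.

End Crossing.

Hypothesis d_ge2 : (1 < d)%N.

Lemma heavy_edges_off_cluster w : sphere v h u -> sphere v h w -> ~ light_cluster w ->
  exists L, [/\ size L = (d - 1)%N, uniq L & forall f, f \in L -> sphere_edge f /\ t <= wt f].
Proof.
move=> su sw Kw; have [p walk lastw] := sphere_connected h_gt0 d_ge2 su sw.
have [[a b] ab_walk [/= Ka Kb]] : exists2 xy, xy \in zip (u :: p) p &
    light_cluster xy.1 /\ ~ light_cluster xy.2.
  by apply: path_exit; [exact: reachable_refl | rewrite lastw].
have /and3P [/adjacentP [j [s [s_unit b_def]]] sa sb] : sphere_step v h a b.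
  by move: walk; rewrite path_zip => /allP /(_ _ ab_walk).
rewrite {}b_def in sb Kb.
have [i ij ai] := exists_coord_at_radius s_unit sa sb.
have [|L [sizeL uniqL PL]] := @uniq_flatten_choice _ _ (heavy_towards a j) 1
    (enum (predC1 i)) (enum_uniq _) _ (@heavy_towards_inj a j).
  move=> l; rewrite mem_enum => /= li.
  have [f Hf] := heavy_towards_each s_unit sa sb Ka Kb ij ai li.
  by exists [:: f] => //; split => // g; rewrite mem_seq1 => /eqP ->.
exists L; split => // [|f /PL [l _ [f_sph f_heavy _ _]] //].
by rewrite sizeL muln1 -cardE cardC1 card_ord subn1.
Qed.

End SphereHeavyEdges.

Notation box_pt d k := {ffun 'I_d -> 'I_(k.*2).+1}.

Section Box.
Variables (d : nat) (v : vtx d) (k : nat).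
Implicit Types (z : vtx d) (o : box_pt d k).

Definition box_code z : box_pt d k :=
  [ffun c => inord (absz (z c - v c + k%:Z)%R)].

Definition box_decode o : vtx d := [ffun c => v c + (o c : nat)%:Z - k%:Z].

Lemma box_codeK z : (linfdist v z <= k)%N -> box_decode (box_code z) = z.
Proof.
move=> /linfdist_leP z_le; apply/vtxP => c; have zc := z_le c.
by rewrite !ffunE inordK; lia.
Qed.

Lemma size_box (s : seq (vtx d)) : uniq s ->
  (forall z, z \in s -> linfdist v z <= k)%N -> (size s <= (k.*2).+1 ^ d)%N.
Proof.
move=> s_uniq s_box; rewrite -(size_map box_code).
have /card_uniqP <- : uniq (map box_code s).
  by rewrite (map_inj_in_uniq (can_in_inj (fun z zs => box_codeK (s_box z zs)))).
by rewrite (leq_trans (max_card _)) // card_ffun !card_ord.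
Qed.

Definition edge_code (f : Edge d) := (box_code (val f).1, box_code (val f).2).

Definition edge_decode (dflt : Edge d) (oo : box_pt d k * box_pt d k) :=
  odflt dflt (edge_of (box_decode oo.1) (box_decode oo.2)).

Lemma edge_codeK dflt f : (linfdist v (val f).1 <= k)%N -> (linfdist v (val f).2 <= k)%N ->
  edge_decode dflt (edge_code f) = f.
Proof. by move=> f1 f2; rewrite /edge_decode /= !box_codeK // edge_of_val. Qed.

End Box.

Section PassageTime.
Variables (R : realType) (d : nat) (A : set (Edge d)) (wt : Edge d -> R) (t : R).

Lemma passT_le_path u p : uniq (u :: p) ->
  (forall xy, xy \in zip (u :: p) p ->
     exists2 f, edge_of xy.1 xy.2 = Some f & A f /\ wt f <= t) ->
  (passT A wt u (last u p) <= ((size p)%:R * t)%:E)%E.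
Proof.
move=> up_uniq steps.
have up_path : sa_path A u (last u p) (u :: p).
  by split => // xy /steps [f xy_f [Af _]]; exists f.
apply: le_trans (ereal_inf_lbound _) _; first by exists (u :: p).
rewrite lee_fin /path_weight /= big_seq.
apply: le_trans (ler_sum _ (G := fun=> t) _) _.
  by move=> xy /steps [f -> [_ wt_f]].
rewrite -big_seq big_const_seq count_predT iter_addr_0 size_zip /=.
by rewrite (minn_idPr (leqnSn _)) mulr_natl.
Qed.

End PassageTime.

Section LightClusterPassage.
Variables (R : realType) (d : nat) (v : vtx d) (h k : nat).
Hypothesis h_le_k : (h <= k)%N.
Variables (wt : Edge d -> R) (t : R) (u w : vtx d).
Hypotheses (t_ge0 : 0 <= t) (su : sphere v h u).

Lemma light_cluster_passT : light_cluster v h wt t u w ->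
  (passT [set f | sphere_edge v h f] wt u w <= (((k.*2).+1 ^ d).-1%:R * t)%:E)%E.
Proof.
move=> [p walk <-]; case: (shortenP walk) => p' walk' uniq' _.
apply: le_trans (passT_le_path (t := t) uniq' _) _.
  move: walk'; rewrite path_zip => /allP steps xy /steps /andP [st].
  have [f [xy_f f_sph]] := sphere_step_edge st.
  by rewrite xy_f => /ltW wt_f; exists f => //; split.
have on_sphere : all (sphere v h) p'.
  by apply: path_all_targets walk' => x y /andP [/and3P []].
rewrite lee_fin ler_wpM2r // ler_nat -ltnS prednK ?expn_gt0 //.
apply: (size_box (v := v)) uniq' _ => z; rewrite inE => /predU1P [->|z_p'].
  by move: su => /eqP ->.
by move: on_sphere => /allP /(_ z z_p') /eqP ->.
Qed.

End LightClusterPassage.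

Section LargeEdge.
Variables (R : realType) (d : nat) (e : Edge d) (k : nat) (M : R).
Hypotheses (d_ge2 : (1 < d)%N) (M_gt0 : 0 < M).
Variable wt : Edge d -> R.
Let v := ve e.
Let N := ((k.*2).+1 ^ d)%N.
(* A light self-avoiding path in the box has at most N - 1 edges, so its passage
   time stays below N t = M. *)
Let t := M / N%:R.

Lemma Sv_sphere h z : (0 < h)%N -> Sv e h z <-> sphere v h z.
Proof. by case: h => // h _; rewrite /Sv /sphere /=; split => /eqP. Qed.

Lemma Se_sphere_edge h : (0 < h)%N -> Se e h = [set f | sphere_edge v h f].
Proof.
case: h => // h _; apply/seteqP; rewrite /Se /Sv /sphere_edge /sphere /=.
by split => f /=; [case=> -> -> | case/andP => /eqP -> /eqP ->]; rewrite ?eqxx.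
Qed.

Lemma heavy_edges_of_passT h : (0 < h)%N -> (h <= k)%N ->
  (exists u w, [/\ Sv e h u, Sv e h w & (M%:E <= passT (Se e h) wt u w)%E]) ->
  exists L, [/\ size L = (d - 1)%N, uniq L &
                forall f, f \in L -> sphere_edge v h f /\ t <= wt f].
Proof.
move=> h_gt0 h_le [u [w [/(Sv_sphere _ h_gt0) su /(Sv_sphere _ h_gt0) sw]]].
rewrite Se_sphere_edge // => M_le.
have N_gt0 : (0 < N)%N by rewrite expn_gt0.
have t_ge0 : 0 <= t by rewrite /t divr_ge0 ?ler0n ?(ltW M_gt0).
apply: (heavy_edges_off_cluster h_gt0 d_ge2 (wt := wt) (t := t) su sw) => Kw.
have := le_trans M_le (light_cluster_passT h_le t_ge0 su Kw).
rewrite lee_fin /t mulrA ler_pdivlMr ?ltr0n // mulrC ler_pM2r //.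
by rewrite ler_nat leqNgt ltn_predL N_gt0.
Qed.

Lemma large_heavy_edges : kM_large k M wt e ->
  exists L, [/\ size L = (k * (d - 1))%N, uniq L & forall f, f \in L ->
    [/\ t <= wt f, (linfdist v (val f).1 <= k)%N & (linfdist v (val f).2 <= k)%N]].
Proof.
move=> large.
have [|h h' f [_ /andP [/eqP <- _] _] [_ /andP [/eqP <- _] _] //|L [sizeL uniqL PL]] :=
  @uniq_flatten_choice _ _ (fun h f => [/\ (0 < h)%N, sphere_edge v h f & t <= wt f])
    (d - 1) (iota 1 k) (iota_uniq _ _).
  move=> h; rewrite mem_iota add1n ltnS => /andP [h_gt0 h_le].
  have [L [sizeL uniqL PL]] := heavy_edges_of_passT h_gt0 h_le (large h h_le).
  by exists L => //; split => // f /PL [].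
exists L; split => //; first by rewrite sizeL size_iota.
move=> f /PL [h]; rewrite mem_iota add1n ltnS => /andP [_ h_le].
by move=> [_ /andP [/eqP -> /eqP ->] wt_f].
Qed.

Lemma large_heavy_codes : kM_large k M wt e ->
  exists2 L : (k * (d - 1)).-tuple (box_pt d k * box_pt d k), uniq (map (edge_decode v e) L) &
    forall oo, oo \in L -> t <= wt (edge_decode v e oo).
Proof.
move=> /large_heavy_edges [L [sizeL uniqL PL]].
have codeK : {in L, cancel (edge_code v k) (edge_decode v e)}.
  by move=> f /PL [_ f1 f2]; exact: edge_codeK.
have size_codes : size (map (edge_code v k) L) == (k * (d - 1))%N.
  by rewrite size_map sizeL.
exists (Tuple size_codes); first by rewrite /= -map_comp map_id_in.
by move=> _ /mapP [f fL ->]; rewrite codeK //; case: (PL f fL).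
Qed.

End LargeEdge.

Lemma measurable_ge (R : realType) (r : R) : measurable [set x : R | r <= x].
Proof.
have -> : [set x : R | r <= x] = `[r, +oo[%classic.
  by apply/seteqP; split => x /=; rewrite in_itv /= andbT.
exact: measurable_itv.
Qed.

Section UnionBound.
Variables (R : realType) (dT : measure_display) (T : measurableType dT).
Variables (P : probability T R) (I : eqType) (X : I -> T -> R).
Hypotheses (mX : forall i, measurable_fun setT (X i))
  (X_id : identically_distributed P X) (X_indep : mutually_independent P X).
Variable t : R.

Lemma measurable_exceed i : measurable [set x | t <= X i x].
Proof. by have := mX i measurableT (measurable_ge t); rewrite setTI. Qed.

Definition all_exceed (s : seq I) : set T :=
  \bigcap_(i in [set i | i \in s]) [set x | t <= X i x].

Lemma measure_all_exceed s i0 : uniq s ->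
  P (all_exceed s) = (P [set x | (t <= X i0 x)%R] ^+ size s)%E.
Proof.
move=> s_uniq; rewrite /all_exceed (X_indep (B := fun=> [set r | t <= r])) //; last first.
  by move=> *; exact: measurable_ge.
rewrite (eq_bigr (fun=> P [set x | (t <= X i0 x)%R])) => [|i _].
  by rewrite big_const_seq count_predT iter_mule mule1.
exact: (X_id i i0 (measurable_ge t)).
Qed.

Lemma union_bound (U : finType) (f : U -> I) m (E : set T) i0 : measurable E ->
  (forall x, E x -> exists2 L : m.-tuple U,
     uniq (map f L) & forall o, o \in L -> t <= X (f o) x) ->
  (P E <= (#|U| ^ m)%:R%:E * P [set x | (t <= X i0 x)%R] ^+ m)%E.
Proof.
move=> mE cover.
pose A (L : m.-tuple U) := if uniq (map f L) then all_exceed (map f L) else set0.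
have mA L : measurable (A L).
  rewrite /A; case: ifP => // _; apply: fin_bigcap_measurable; first exact: finite_seq.
  by move=> i _; exact: measurable_exceed.
have PA L : (P (A L) <= P [set x | (t <= X i0 x)%R] ^+ m)%E.
  rewrite /A; case: ifP => [L_uniq|_]; last by rewrite measure0 expe_ge0.
  by rewrite (measure_all_exceed i0 L_uniq) size_map size_tuple.
have E_sub : E `<=` \bigcup_(L in setT) A L.
  move=> x /cover [L L_uniq L_exceed]; exists L => //.
  by rewrite /A L_uniq; move=> _ /mapP [u uL ->]; exact: L_exceed.
apply: le_trans (content_sub_fsum _ finite_finset (fun L _ => mA L) mE E_sub) _.
rewrite (fsbigE (enum {: m.-tuple U})) ?enum_uniq //=; last by move=> L _; rewrite mem_enum.
under eq_bigl do rewrite in_setT.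
rewrite big_enum /=; apply: le_trans; first by apply: lee_sum => L _; exact: PA.
by rewrite sumr_const card_tuple mule_natl.
Qed.

End UnionBound.

Section Measurability.
Variables (R : realType) (dT : measure_display) (T : measurableType dT).
Implicit Types (Q : Prop) (A : set T).

Lemma measurable_exists (U : countType) (F : U -> set T) :
  (forall u, measurable (F u)) -> measurable [set x | exists u, F u x].
Proof.
move=> mF; have -> : [set x | exists u, F u x] = \bigcup_u F u.
  by apply/seteqP; split => x /= [u]; exists u.
exact: countable_bigcupT_measurable.
Qed.

Lemma measurable_forall (U : countType) (F : U -> set T) :
  (forall u, measurable (F u)) -> measurable [set x | forall u, F u x].
Proof.
move=> mF; have -> : [set x | forall u, F u x] = ~` [set x | exists u, ~ F u x].
  apply/seteqP; split => x /= Fx; first by case=> u; apply.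
  by move=> u; apply: contrapT => nFux; apply: Fx; exists u.
by apply/measurableC/measurable_exists => u; exact/measurableC.
Qed.

Lemma measurable_and_prop Q A : (Q -> measurable A) -> measurable [set x | Q /\ A x].
Proof.
move=> mA; have [q|nq] := pselect Q.
  have -> : [set x | Q /\ A x] = A by apply/seteqP; split => [x []|x Ax].
  exact: mA.
by have -> : [set x | Q /\ A x] = set0 by apply/seteqP; split => x // [].
Qed.

Lemma measurable_imply_prop Q A : (Q -> measurable A) -> measurable [set x | Q -> A x].
Proof.
move=> mA; have [q|nq] := pselect Q.
  have -> : [set x | Q -> A x] = A by apply/seteqP; split => [x /(_ q)|x Ax _].
  exact: mA.
by have -> : [set x | Q -> A x] = setT by apply/seteqP; split => x // _.
Qed.

Variables (d : nat) (tau : Edge d -> T -> R).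
Hypothesis mtau : forall f, measurable_fun setT (tau f).

Lemma measurable_path_weight_ge gam (r : R) :
  measurable [set x | r <= path_weight (fun f => tau f x) gam].
Proof.
have mw : measurable_fun setT (fun x => path_weight (fun f => tau f x) gam).
  apply: measurable_sum => xy.
  by case: (edge_of xy.1 xy.2) => [f|]; [exact: mtau | exact: measurable_cst].
by have := mw measurableT _ (measurable_ge r); rewrite setTI.
Qed.

Lemma measurable_passT_ge (A : set (Edge d)) u w (r : R) :
  measurable [set x | (r%:E <= passT A (fun f => tau f x) u w)%E].
Proof.
have -> : [set x | (r%:E <= passT A (fun f => tau f x) u w)%E] =
    [set x | forall gam, sa_path A u w gam -> r <= path_weight (fun f => tau f x) gam].
  apply/seteqP; split => x /= r_le.
    move=> gam gam_path; rewrite -lee_fin; apply: le_trans r_le _.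
    by apply: ereal_inf_lbound; exists gam.
  by apply: le_ereal_inf_tmp => _ [gam gam_path <-]; rewrite lee_fin; exact: r_le.
apply: measurable_forall => gam; apply: measurable_imply_prop => _.
exact: measurable_path_weight_ge.
Qed.

Lemma measurable_large k (M : R) e :
  measurable [set x | kM_large k M (fun f => tau f x) e].
Proof.
apply: measurable_forall => h; apply: measurable_imply_prop => _.
have : measurable [set x | exists uw : vtx d * vtx d, (Sv e h uw.1 /\ Sv e h uw.2) /\
                    (M%:E <= passT (Se e h) (fun f => tau f x) uw.1 uw.2)%E].
  apply: measurable_exists => uw; apply: measurable_and_prop => _.
  exact: measurable_passT_ge.
congr (measurable _); apply/seteqP; split => x /=.
  by move=> [[u w] [[Su Sw] M_le]]; exists u, w.
by move=> [u [w [Su Sw M_le]]]; exists (u, w).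
Qed.

End Measurability.

Lemma expeM (R : realType) (x : \bar R) m n : (x ^+ (m * n) = (x ^+ m) ^+ n)%E.
Proof.
have expeD p q : (x ^+ (p + q) = x ^+ p * x ^+ q)%E.
  by elim: p => [|p IH]; rewrite ?mul1e // addSn !expeS IH muleA.
by elim: n => [|n IH]; rewrite ?muln0 // mulnS expeD IH expeS.
Qed.

Theorem lemma3p2 (R : realType) (d k : nat) (hd : (2 <= d)%N) :
  exists C C' : R, 0 < C /\ 1 <= C' /\
  forall (dT : measure_display) (T : measurableType dT) (P : probability T R)
         (tau : Edge d -> T -> R),
    (forall e, measurable_fun setT (tau e)) ->
    (forall e x, 0 <= tau e x) ->
    identically_distributed P tau ->
    mutually_independent P tau ->
    forall M : R, 0 < M ->
    forall e : Edge d,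
      (P [set x | kM_large k M (fun f => tau f x) e]
        <= C%:E * ((P [set x | (M / C' <= tau e x)%R]) ^+ k) ^+ (d - 1))%E.
Proof.
exists (#|{: box_pt d k * box_pt d k}| ^ (k * (d - 1)))%:R, ((k.*2).+1 ^ d)%:R.
have codes_gt0 : (0 < #|{: box_pt d k * box_pt d k}|)%N.
  by apply/card_gt0P; exists ([ffun=> ord0], [ffun=> ord0]).
split; first by rewrite ltr0n expn_gt0 codes_gt0.
split; first by rewrite ler1n expn_gt0.
move=> dT T P tau mtau _ tau_id tau_indep M M_gt0 e.
rewrite -expeM; apply: (union_bound mtau tau_id tau_indep (f := edge_decode (ve e) e)).
  exact: measurable_large.
by move=> x /(large_heavy_codes hd M_gt0).
Qed.
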